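(* For every non-empty list $\Omega$ of atoms, the posets $\mathrm{Frm}_\Omega$ and $\mathrm{Ctx}_\Omega$ are lattices.
   Context: Formulas are built from atoms ($p,q,\dots$) by a binary product: every formula is an atom or $A\bullet B$. A context is a finite (possibly empty) list of formulas; commas denote concatenation. The frontier $\mathrm{fr}$ of a formula is its ordered list of atom occurrences: $\mathrm{fr}(p)=p$, $\mathrm{fr}(A\bullet B)=\mathrm{fr}(A),\mathrm{fr}(B)$; the frontier of a context is the concatenation of the frontiers of its formulas. The sequent calculus has exactly four rules (no weakening, contraction or exchange): ($\bullet L$) from $A,B,\Delta\vdash C$ infer $A\bullet B,\Delta\vdash C$ (the product must be leftmost); ($\bullet R$) from $\Gamma\vdash A$ and $\Delta\vdash B$ infer $\Gamma,\Delta\vdash A\bullet B$; ($id$) $A\vdash A$; ($cut$) from $\Theta\vdash A$ and $\Gamma,A,\Delta\vdash B$ infer $\Gamma,\Theta,\Delta\vdash B$; derivable means conclusion of a finite derivation tree with no undischarged premises. The Tamari order $\le$ on formulas is the least preorder with $(A\bullet B)\bullet C\le A\bullet(B\bullet C)$ and $A_1\le A_2$, $B_1\le B_2$ implying $A_1\bullet B_1\le A_2\bullet B_2$. The substitution order on contexts is the least relation $\le$ such that: (1) if $\Gamma\vdash A$ is derivable then $\Gamma\le A$ (the one-element context); (2) $\cdot\le\cdot$ for the empty context; (3) if $\Gamma_1\le\Gamma_2$ and $\Theta_1\le\Theta_2$ then $(\Gamma_1,\Theta_1)\le(\Gamma_2,\Theta_2)$. $\mathrm{Frm}_\Omega$ is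 the set of formulas with frontier $\Omega$ under the Tamari order, and $\mathrm{Ctx}_\Omega$ is the set of contexts with frontier $\Omega$ under the substitution order. *)

From Stdlib Require Import List.
Import ListNotations.
Set Implicit Arguments.

Section Defs.
Variable Atom : Type.

Inductive formula : Type :=
| At : Atom -> formula
| Prod : formula -> formula -> formula.

Definition context := list formula.

Fixpoint fr (F : formula) : list Atom :=
  match F with
  | At p => [p]
  | Prod A B => fr A ++ fr B
  end.

Definition frc (G : context) : list Atom := flat_map fr G.

Inductive derivable : context -> formula -> Prop :=
| d_prodL : forall A B D C,
    derivable (A :: B :: D) C -> derivable (Prod A B :: D) C
| d_prodR : forall G D A B,
    derivable G A -> derivable D B -> derivable (G ++ D) (Prod A B)
| d_id : forall A, derivable [A] A
| d_cut : forall Th A G D B,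
    derivable Th A -> derivable (G ++ A :: D) B -> derivable (G ++ Th ++ D) B.

Inductive tamari : formula -> formula -> Prop :=
| t_refl : forall A, tamari A A
| t_trans : forall A B C, tamari A B -> tamari B C -> tamari A C
| t_assoc : forall A B C, tamari (Prod (Prod A B) C) (Prod A (Prod B C))
| t_mono : forall A1 A2 B1 B2,
    tamari A1 A2 -> tamari B1 B2 -> tamari (Prod A1 B1) (Prod A2 B2).

Inductive subst_le : context -> context -> Prop :=
| s_deriv : forall G A, derivable G A -> subst_le G [A]
| s_nil : subst_le [] []
| s_app : forall G1 G2 T1 T2,
    subst_le G1 G2 -> subst_le T1 T2 -> subst_le (G1 ++ T1) (G2 ++ T2).

End Defs.

Definition is_lattice {T : Type} (X : T -> Prop) (le : T -> T -> Prop) : Prop :=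
  (forall x, X x -> le x x) /\
  (forall x y, X x -> X y -> le x y -> le y x -> x = y) /\
  (forall x y z, X x -> X y -> X z -> le x y -> le y z -> le x z) /\
  (forall x y, X x -> X y ->
     exists m, X m /\ le m x /\ le m y /\
       (forall z, X z -> le z x -> le z y -> le z m)) /\
  (forall x y, X x -> X y ->
     exists j, X j /\ le x j /\ le y j /\
       (forall z, X z -> le x z -> le y z -> le j z)).

Definition Frm {Atom : Type} (Om : list Atom) : formula Atom -> Prop :=
  fun F => fr F = Om.
Definition Ctx {Atom : Type} (Om : list Atom) : context Atom -> Prop :=
  fun G => frc G = Om.

(** Encode a formula by its bracket vector, whose entry at an atom occurrence is the number
    of atoms of the largest subformula whose frontier starts there.  Then A ≤ B in the Tamari
    order iff A and B have the same frontier and the bracket vector of A is componentwise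
    below that of B.  A sequent A₁, …, Aₙ ⊢ C is derivable iff (…(A₁•A₂)…)•Aₙ ≤ C, so the
    substitution order on contexts is likewise the componentwise order on concatenated
    bracket vectors.  The vectors that occur are exactly the well-nested ones; these are
    closed under componentwise minimum and can be decoded, which gives meets of contexts.
    Since Γ ↦ (…(p•Γ₁)…)•Γₙ is an order isomorphism from Ctx_Ω onto Frm_{pΩ}, formulas have
    meets too; mirroring formulas reverses the Tamari order and turns meets into joins, and
    the same isomorphism carries joins back to contexts. *)

From Stdlib Require Import List Arith Lia RelationClasses.
Import ListNotations.

Lemma app_inj_length {T : Type} (l1 l2 l1' l2' : list T) :
  length l1 = length l1' -> l1 ++ l2 = l1' ++ l2' -> l1 = l1' /\ l2 = l2'.
Proof.
  revert l1'; induction l1 as [|x l1 IH]; intros [|y l1'] Hl He;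
    try discriminate; auto.
  injection He as -> He. destruct (IH l1') as [-> ->]; auto.
Qed.

Lemma firstn_app_length {T : Type} n (l1 l2 : list T) :
  n = length l1 -> firstn n (l1 ++ l2) = l1.
Proof. intros ->. rewrite firstn_app, Nat.sub_diag, firstn_all. apply app_nil_r. Qed.

Lemma skipn_app_length {T : Type} n (l1 l2 : list T) :
  n = length l1 -> skipn n (l1 ++ l2) = l2.
Proof. intros ->. rewrite skipn_app, Nat.sub_diag, skipn_all. reflexivity. Qed.

Lemma Forall2_app_inv_length {A B : Type} (R : A -> B -> Prop) a1 a2 b1 b2 :
  length a1 = length b1 -> Forall2 R (a1 ++ a2) (b1 ++ b2) ->
  Forall2 R a1 b1 /\ Forall2 R a2 b2.
Proof.
  intros Hl (b1' & b2' & H1 & H2 & E)%Forall2_app_inv_l.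
  apply Forall2_length in H1 as Hl'.
  destruct (app_inj_length b1 b2 b1' b2') as [-> ->]; auto; congruence.
Qed.

#[local] Instance Forall2_Reflexive (A : Type) (R : A -> A -> Prop) `{Reflexive A R} :
  Reflexive (Forall2 R).
Proof. intros l; induction l; constructor; auto. Qed.

#[local] Instance Forall2_Transitive (A : Type) (R : A -> A -> Prop) `{Transitive A R} :
  Transitive (Forall2 R).
Proof.
  intros a b c Hab; revert c; induction Hab; intros c Hbc; inversion Hbc; subst;
    constructor; eauto.
Qed.

Lemma Forall2_antisym {A : Type} {R : A -> A -> Prop} :
  (forall x y, R x y -> R y x -> x = y) ->
  forall a b, Forall2 R a b -> Forall2 R b a -> a = b.
Proof.
  intros Hanti a b H; induction H; intros H'; inversion H'; subst; f_equal; auto.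
Qed.

Lemma Forall2_tl {A B : Type} (R : A -> B -> Prop) a b :
  Forall2 R a b -> Forall2 R (tl a) (tl b).
Proof. intros []; auto. Qed.

(** * Well-nested vectors *)

(** Read an entry [x] of a vector as the block of the [x] entries starting at it.
    [bounded]: every block ends inside the vector; [well_nested]: blocks are nonempty and
    every block starting inside a block ends inside it. *)
Fixpoint bounded (l : list nat) : Prop :=
  match l with
  | [] => True
  | x :: l' => x <= S (length l') /\ bounded l'
  end.

Fixpoint well_nested (l : list nat) : Prop :=
  match l with
  | [] => True
  | x :: l' => 1 <= x /\ x <= S (length l') /\ bounded (firstn (x - 1) l') /\ well_nested l'
  end.

Fixpoint zip_min (a b : list nat) : list nat :=
  match a, b with
  | x :: a', y :: b' => Nat.min x y :: zip_min a' b'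
  | _, _ => []
  end.

Lemma bounded_app a b : bounded a -> bounded b -> bounded (a ++ b).
Proof.
  induction a as [|x a IH]; simpl; auto.
  intros [Hx Ha] Hb. rewrite length_app. split; [lia | auto].
Qed.

Lemma bounded_tl l : bounded l -> bounded (tl l).
Proof. destruct l; simpl; tauto. Qed.

Lemma bounded_skipn k l : bounded l -> bounded (skipn k l).
Proof. revert l; induction k; intros []; simpl; intuition. Qed.

Lemma bounded_Forall2_le a b : Forall2 le a b -> bounded b -> bounded a.
Proof.
  intros H; induction H as [|x y a b Hxy Hab IH]; simpl; auto.
  intros [Hy Hb]. apply Forall2_length in Hab. split; [lia | auto].
Qed.

Lemma well_nested_bounded l : well_nested l -> bounded l.
Proof. induction l; simpl; intuition. Qed.

Lemma well_nested_skipn k l : well_nested l -> well_nested (skipn k l).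
Proof. revert l; induction k; intros []; simpl; intuition. Qed.

Lemma well_nested_app a b : well_nested a -> well_nested b -> well_nested (a ++ b).
Proof.
  intros Ha Hb. induction a as [|x a IH]; simpl in *; auto.
  destruct Ha as (H1 & H2 & H3 & H4).
  rewrite length_app, firstn_app. replace (x - 1 - length a) with 0 by lia.
  rewrite app_nil_r. repeat split; auto; lia.
Qed.

Lemma well_nested_firstn k l : well_nested l -> bounded (firstn k l) -> well_nested (firstn k l).
Proof.
  revert k; induction l as [|x l IH]; intros [|k]; simpl; auto.
  intros (H1 & H2 & H3 & H4) [Hx Hb]. rewrite length_firstn in *.
  rewrite firstn_firstn, (Nat.min_l (x - 1) k) by lia. repeat split; auto.
Qed.

Lemma length_zip_min a b : length (zip_min a b) = Nat.min (length a) (length b).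
Proof. revert b; induction a; intros []; simpl; auto. Qed.

Lemma firstn_zip_min k a b : firstn k (zip_min a b) = zip_min (firstn k a) (firstn k b).
Proof. revert a b; induction k; intros [|x a] [|y b]; simpl; f_equal; auto. Qed.

Lemma zip_min_le_l a b : length a = length b -> Forall2 le (zip_min a b) a.
Proof.
  revert b; induction a; intros [|y b] Hl; try discriminate; constructor; auto; lia.
Qed.

Lemma zip_min_le_r a b : length a = length b -> Forall2 le (zip_min a b) b.
Proof.
  revert b; induction a; intros [|y b] Hl; try discriminate; constructor; auto; lia.
Qed.

Lemma zip_min_glb c a b : Forall2 le c a -> Forall2 le c b -> Forall2 le c (zip_min a b).
Proof.
  intros H; revert b; induction H; intros b' H'; inversion H'; subst; constructor; auto; lia.
Qed.

Lemma well_nested_zip_min a b :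
  length a = length b -> well_nested a -> well_nested b -> well_nested (zip_min a b).
Proof.
  revert b; induction a as [|x a IH]; intros [|y b] Hl; simpl; auto; try discriminate.
  intros (Hx1 & Hx2 & Hxa & Ha) (Hy1 & Hy2 & Hyb & Hb). injection Hl as Hl.
  rewrite length_zip_min, firstn_zip_min. repeat split; auto; try lia.
  destruct (Nat.le_ge_cases x y).
  - rewrite Nat.min_l by lia. apply (bounded_Forall2_le _ (firstn (x - 1) a)); auto.
    apply zip_min_le_l. rewrite !length_firstn; lia.
  - rewrite Nat.min_r by lia. apply (bounded_Forall2_le _ (firstn (y - 1) b)); auto.
    apply zip_min_le_r. rewrite !length_firstn; lia.
Qed.

Definition has_meets {T : Type} (X : T -> Prop) (le : T -> T -> Prop) : Prop :=
  forall x y, X x -> X y ->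
    exists m, X m /\ le m x /\ le m y /\ (forall z, X z -> le z x -> le z y -> le z m).

Definition has_joins {T : Type} (X : T -> Prop) (le : T -> T -> Prop) : Prop :=
  has_meets X (fun x y => le y x).

Section OrderIso.
Context {T U : Type} {X : T -> Prop} {Y : U -> Prop}.
Context {leX : T -> T -> Prop} {leY : U -> U -> Prop} {f : U -> T}.
Hypothesis f_into : forall y, Y y -> X (f y).
Hypothesis f_onto : forall x, X x -> exists y, Y y /\ f y = x.
Hypothesis f_le : forall y y', Y y -> Y y' -> leX (f y) (f y') <-> leY y y'.

Lemma has_meets_iso : has_meets X leX <-> has_meets Y leY.
Proof.
  split; intros Hmeet.
  - intros y1 y2 H1 H2.
    destruct (Hmeet (f y1) (f y2)) as (m & Hm & Hm1 & Hm2 & Hglb); auto.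
    destruct (f_onto m Hm) as (y & Hy & <-).
    exists y. rewrite <- !f_le by auto. repeat split; auto.
    intros z Hz Hz1 Hz2. apply f_le; auto. apply Hglb; auto; apply f_le; auto.
  - intros x1 x2 H1 H2.
    destruct (f_onto x1 H1) as (y1 & Hy1 & <-), (f_onto x2 H2) as (y2 & Hy2 & <-).
    destruct (Hmeet y1 y2) as (m & Hm & Hm1 & Hm2 & Hglb); auto.
    exists (f m). rewrite !f_le by auto. repeat split; auto.
    intros x Hx. destruct (f_onto x Hx) as (z & Hz & <-). rewrite !f_le by auto. auto.
Qed.

End OrderIso.

(** * Bracket vectors and the Tamari order *)

Section Formulas.
Variable Atom : Type.
Implicit Types (A B C X Y Z : formula Atom) (G D : context Atom) (a b : Atom).

Local Notation tam := (@tamari Atom).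

Definition lprod X G : formula Atom := fold_left (@Prod Atom) G X.

Lemma lprod_cons X C G : lprod X (C :: G) = lprod (Prod X C) G.
Proof. reflexivity. Qed.

Lemma lprod_app X G D : lprod X (G ++ D) = lprod (lprod X G) D.
Proof. apply fold_left_app. Qed.

Lemma formula_lprod_At A : exists a G, A = lprod (At a) G.
Proof.
  induction A as [p|A1 [a [G ->]] A2 _].
  - exists p, []. reflexivity.
  - exists a, (G ++ [A2]). rewrite lprod_app. reflexivity.
Qed.

Lemma fr_lprod X G : fr (lprod X G) = fr X ++ frc G.
Proof.
  revert X; induction G as [|C G IH]; intros X.
  - simpl. now rewrite app_nil_r.
  - rewrite lprod_cons, IH. simpl. now rewrite app_assoc.
Qed.

Lemma length_fr_pos A : 0 < length (fr A).
Proof. induction A; simpl; rewrite ?length_app; lia. Qed.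

Fixpoint bvec A : list nat :=
  match A with
  | At _ => [1]
  | Prod A B => length (fr A) + length (fr B) :: tl (bvec A) ++ bvec B
  end.

Definition bcode G : list nat := flat_map bvec G.

Lemma bcode_cons C G : bcode (C :: G) = bvec C ++ bcode G.
Proof. reflexivity. Qed.

Lemma bcode_app G D : bcode (G ++ D) = bcode G ++ bcode D.
Proof. apply flat_map_app. Qed.

Lemma bcode_singleton A : bcode [A] = bvec A.
Proof. apply app_nil_r. Qed.

Lemma frc_singleton A : frc [A] = fr A.
Proof. apply app_nil_r. Qed.

Lemma frc_cons C G : frc (C :: G) = fr C ++ frc G.
Proof. reflexivity. Qed.

Lemma frc_app G D : frc (G ++ D) = frc G ++ frc D.
Proof. apply flat_map_app. Qed.

Lemma bvec_hd A : bvec A = length (fr A) :: tl (bvec A).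
Proof. destruct A; simpl; rewrite ?length_app; reflexivity. Qed.

Lemma length_bvec A : length (bvec A) = length (fr A).
Proof.
  induction A as [p|A IHA B IHB]; simpl; auto.
  pose proof (length_fr_pos A). rewrite !length_app, length_tl. lia.
Qed.

Lemma length_tl_bvec A : S (length (tl (bvec A))) = length (fr A).
Proof. rewrite length_tl, length_bvec. pose proof (length_fr_pos A). lia. Qed.

Lemma length_bcode G : length (bcode G) = length (frc G).
Proof.
  induction G; auto. rewrite bcode_cons, frc_cons, !length_app, length_bvec. congruence.
Qed.

Lemma bvec_lprod X G :
  bvec (lprod X G) = length (fr X) + length (frc G) :: tl (bvec X) ++ bcode G.
Proof.
  revert X; induction G as [|C G IH]; intros X.
  - simpl. rewrite Nat.add_0_r, app_nil_r. apply bvec_hd.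
  - rewrite lprod_cons, IH, frc_cons, bcode_cons. cbn. rewrite <- app_assoc, !length_app.
    f_equal. lia.
Qed.

Lemma well_nested_bvec A : well_nested (bvec A).
Proof.
  induction A as [p|A IHA B IHB]; simpl; auto.
  pose proof (length_tl_bvec A). pose proof (length_fr_pos A).
  assert (Hlen : length (tl (bvec A) ++ bvec B) = length (fr A) + length (fr B) - 1)
    by (rewrite length_app, length_bvec; lia).
  repeat split; try lia.
  - rewrite firstn_all2 by lia.
    apply bounded_app; [apply bounded_tl|]; apply well_nested_bounded; auto.
  - apply well_nested_app; auto. destruct (bvec A); simpl in *; tauto.
Qed.

Lemma well_nested_bcode G : well_nested (bcode G).
Proof.
  induction G; [exact I|]. rewrite bcode_cons. apply well_nested_app; auto using well_nested_bvec.
Qed.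

Lemma tamari_fr A B : tam A B -> fr A = fr B.
Proof. intros H; induction H; simpl; try congruence. now rewrite app_assoc. Qed.

Lemma tamari_lprod_l X X' G : tam X X' -> tam (lprod X G) (lprod X' G).
Proof.
  revert X X'; induction G; intros X X' H; auto.
  rewrite !lprod_cons. apply IHG, t_mono; auto using t_refl.
Qed.

Lemma tamari_lprod_assoc Y Z G : tam (lprod (Prod Y Z) G) (Prod Y (lprod Z G)).
Proof.
  revert Z; induction G as [|C G IH]; intros Z; [apply t_refl|].
  rewrite !lprod_cons. eapply t_trans; [apply tamari_lprod_l, t_assoc | apply IH].
Qed.

Lemma tamari_bvec_le A B : tam A B -> Forall2 le (bvec A) (bvec B).
Proof.
  intros H; induction H as [A|A B C _ IH1 _ IH2|A B C|A1 A2 B1 B2 H1 IH1 H2 IH2].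
  - reflexivity.
  - etransitivity; eauto.
  - simpl. rewrite (bvec_hd B), !length_app, <- app_assoc. simpl.
    constructor; [lia|]. apply Forall2_app; [reflexivity|]. constructor; [lia|reflexivity].
  - simpl. rewrite (tamari_fr _ _ H1), (tamari_fr _ _ H2).
    constructor; auto. apply Forall2_app; auto using Forall2_tl.
Qed.

(** Each block of [bcode G] starts with its size, which is at most the corresponding entry of
    the bounded [M]: so no formula of [G] straddles the end of [M]. *)
Lemma bcode_le_split G M N :
  Forall2 le (bcode G) (M ++ N) -> bounded M ->
  exists G1 G2, G = G1 ++ G2 /\ length (bcode G1) = length M.
Proof.
  revert M; induction G as [|C G IH]; intros M H HM.
  - exists [], []. apply Forall2_length in H. rewrite length_app in H. simpl in *.
    split; [reflexivity | lia].
  - destruct M as [|m M]; [exists [], (C :: G); auto|].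
    rewrite bcode_cons, bvec_hd in H. simpl in H.
    inversion H as [|? ? ? ? Hm Hrest]; subst. destruct HM as [HmM HM].
    pose proof (length_tl_bvec C) as Hk.
    rewrite <- (firstn_skipn (length (tl (bvec C))) M), <- app_assoc in Hrest.
    apply Forall2_app_inv_length in Hrest as [_ Hrest]; [|rewrite length_firstn; lia].
    destruct (IH _ Hrest (bounded_skipn _ _ HM)) as (G1 & G2 & -> & E).
    exists (C :: G1), G2. split; auto.
    rewrite bcode_cons, length_app, E, length_skipn, length_bvec. simpl. lia.
Qed.

Lemma bvec_lprod_le A G B :
  length (fr A ++ frc G) = length (fr B) ->
  Forall2 le (bcode (A :: G)) (bvec B) -> Forall2 le (bvec (lprod A G)) (bvec B).
Proof.
  intros Hlen Hv. rewrite bcode_cons, (bvec_hd A), (bvec_hd B) in Hv.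
  inversion Hv; subst. rewrite bvec_lprod, (bvec_hd B), <- Hlen, length_app.
  constructor; auto.
Qed.

Lemma tamari_of_bvec_le A B : fr A = fr B -> Forall2 le (bvec A) (bvec B) -> tam A B.
Proof.
  revert A; induction B as [q|B1 IH1 B2 IH2]; intros A Hfr Hv.
  - destruct A as [p|A1 A2]; simpl in Hfr.
    + injection Hfr as ->. apply t_refl.
    + pose proof (length_fr_pos A1); pose proof (length_fr_pos A2).
      apply (f_equal (@length Atom)) in Hfr. rewrite length_app in Hfr. simpl in Hfr. lia.
  - destruct (formula_lprod_At A) as (a & G & ->).
    rewrite bvec_lprod in Hv. inversion Hv as [|? ? ? ? _ Hc]; subst.
    pose proof (bounded_tl _ (well_nested_bounded _ (well_nested_bvec B1))) as HB1.
    destruct (bcode_le_split G _ _ Hc HB1) as (G1 & G2 & -> & E).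
    rewrite bcode_app in Hc. apply Forall2_app_inv_length in Hc as [Hc1 Hc2]; [|exact E].
    destruct G2 as [|A2 G2].
    { apply Forall2_length in Hc2. simpl in Hc2. rewrite length_bvec in Hc2.
      pose proof (length_fr_pos B2). lia. }
    assert (HG1 : S (length (frc G1)) = length (fr B1))
      by (rewrite <- length_bcode, E; apply length_tl_bvec).
    rewrite fr_lprod, frc_app, app_assoc in Hfr. simpl in Hfr.
    apply (app_inj_length (a :: frc G1)) in Hfr as [Hf1 Hf2]; [|exact HG1].
    rewrite lprod_app, lprod_cons. eapply t_trans; [apply tamari_lprod_assoc|].
    apply t_mono.
    + apply IH1; [rewrite fr_lprod; exact Hf1|].
      rewrite bvec_lprod, (bvec_hd B1). constructor; auto. simpl. lia.
    + apply IH2; [rewrite fr_lprod; exact Hf2|].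
      apply bvec_lprod_le; [rewrite <- Hf2; reflexivity | exact Hc2].
Qed.

Lemma tamari_iff_bvec_le A B : tam A B <-> fr A = fr B /\ Forall2 le (bvec A) (bvec B).
Proof.
  split; [intros H; split; auto using tamari_fr, tamari_bvec_le|].
  intros [Hfr Hv]; apply tamari_of_bvec_le; auto.
Qed.

(** * Sequents and the substitution order *)

Lemma derivable_lprod A G : derivable (A :: G) (lprod A G).
Proof.
  revert A; induction G as [|C G IH] using rev_ind; intros A; [apply d_id|].
  rewrite lprod_app. change (A :: G ++ [C]) with ((A :: G) ++ [C]).
  apply d_prodR; auto using d_id.
Qed.

Lemma derivable_of_tamari A B : tam A B -> derivable [A] B.
Proof.
  intros H; induction H as [A|A B C _ IH1 _ IH2|A B C|A1 A2 B1 B2 _ IH1 _ IH2].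
  - apply d_id.
  - exact (d_cut [] [] IH1 IH2).
  - apply d_prodL, d_prodL.
    exact (d_prodR (d_id A) (d_prodR (d_id B) (d_id C))).
  - apply d_prodL. exact (d_prodR IH1 IH2).
Qed.

Lemma derivable_of_tamari_lprod A G C : tam (lprod A G) C -> derivable (A :: G) C.
Proof.
  intros H. rewrite <- (app_nil_r (A :: G)).
  exact (d_cut [] [] (derivable_lprod A G) (derivable_of_tamari _ _ H)).
Qed.

Lemma tamari_lprod_of_derivable G C :
  derivable G C -> exists A G', G = A :: G' /\ tam (lprod A G') C.
Proof.
  intros H; induction H as [A B D C _ (A' & G' & E & IH) | G D A B _ IH1 _ IH2 | A
                           | Th A G D B _ IH1 _ IH2].
  - injection E as <- <-. exists (Prod A B), D. auto.
  - destruct IH1 as (A' & G' & -> & H1), IH2 as (B' & D' & -> & H2).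
    exists A', (G' ++ B' :: D'). split; auto.
    rewrite lprod_app, lprod_cons. eapply t_trans; [apply tamari_lprod_assoc|].
    apply t_mono; auto.
  - exists A, []. split; auto using t_refl.
  - destruct IH1 as (T & Th' & -> & H1), IH2 as (B' & GD & E & H2).
    destruct G as [|g G]; simpl in E; injection E as <- <-.
    + exists T, (Th' ++ D). split; auto.
      rewrite lprod_app. eapply t_trans; [apply tamari_lprod_l, H1 | exact H2].
    + exists g, (G ++ T :: Th' ++ D). split; auto.
      rewrite lprod_app in *. rewrite lprod_cons in H2.
      rewrite app_comm_cons, lprod_app, lprod_cons.
      eapply t_trans; [apply tamari_lprod_l | exact H2].
      eapply t_trans; [apply tamari_lprod_assoc | apply t_mono; auto using t_refl].
Qed.

Lemma subst_le_bcode G D :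
  subst_le G D -> frc G = frc D /\ Forall2 le (bcode G) (bcode D).
Proof.
  intros H; induction H as [G A H | | G1 G2 T1 T2 _ [Hf1 Hv1] _ [Hf2 Hv2]].
  - destruct (tamari_lprod_of_derivable _ _ H) as (A' & G' & -> & HA).
    apply tamari_iff_bvec_le in HA as [Hf Hv].
    rewrite fr_lprod, bvec_lprod in *.
    rewrite frc_cons, bcode_cons, frc_singleton, bcode_singleton, <- Hf.
    split; [reflexivity|].
    etransitivity; [|exact Hv]. rewrite (bvec_hd A'). constructor; [lia | reflexivity].
  - split; constructor.
  - rewrite !frc_app, !bcode_app. split; [congruence | apply Forall2_app; auto].
Qed.

Lemma subst_le_of_bcode G D :
  frc G = frc D -> Forall2 le (bcode G) (bcode D) -> subst_le G D.
Proof.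
  revert G; induction D as [|B D IH]; intros G Hf Hv.
  - destruct G as [|C G]; [apply s_nil|].
    apply (f_equal (@length Atom)) in Hf. rewrite frc_cons, length_app in Hf.
    pose proof (length_fr_pos C). simpl in Hf. lia.
  - rewrite bcode_cons in Hv.
    pose proof (well_nested_bounded _ (well_nested_bvec B)) as HB.
    destruct (bcode_le_split G _ _ Hv HB) as (G1 & G2 & -> & E).
    rewrite bcode_app in Hv. apply Forall2_app_inv_length in Hv as [Hv1 Hv2]; [|exact E].
    rewrite frc_app, frc_cons in Hf.
    apply app_inj_length in Hf as [Hf1 Hf2]; [|rewrite <- length_bcode, E; apply length_bvec].
    change (B :: D) with ([B] ++ D). apply s_app; [apply s_deriv | apply IH; auto].
    destruct G1 as [|A G1].
    { simpl in E. rewrite length_bvec in E. pose proof (length_fr_pos B). lia. }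
    apply derivable_of_tamari_lprod, tamari_of_bvec_le; [rewrite fr_lprod; exact Hf1|].
    apply bvec_lprod_le; [rewrite <- Hf1; reflexivity | exact Hv1].
Qed.

Lemma subst_le_iff_bcode G D :
  subst_le G D <-> frc G = frc D /\ Forall2 le (bcode G) (bcode D).
Proof.
  split; [apply subst_le_bcode | intros [Hf Hv]; apply subst_le_of_bcode; auto].
Qed.

Lemma tamari_lprod_iff_subst_le a G D :
  tam (lprod (At a) G) (lprod (At a) D) <-> subst_le G D.
Proof.
  rewrite tamari_iff_bvec_le, subst_le_iff_bcode, !fr_lprod, !bvec_lprod. simpl.
  split.
  - intros [Hf Hv]. injection Hf as Hf. inversion Hv; subst. auto.
  - intros [Hf Hv]. rewrite Hf. auto.
Qed.

(** [n] is fuel: any [n >= length w] decodes [w] completely. *)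
Fixpoint decode (n : nat) (w : list nat) (om : list Atom) : context Atom :=
  match n, w, om with
  | S n, x :: w, a :: om =>
      lprod (At a) (decode n (firstn (x - 1) w) (firstn (x - 1) om))
        :: decode n (skipn (x - 1) w) (skipn (x - 1) om)
  | _, _, _ => []
  end.

Lemma bcode_decode n w om :
  length w <= n -> well_nested w -> length om = length w ->
  bcode (decode n w om) = w /\ frc (decode n w om) = om.
Proof.
  revert w om; induction n as [|n IH]; intros w om Hn Hw Hom.
  - destruct w; [|simpl in Hn; lia]. destruct om; [split; reflexivity | discriminate].
  - destruct w as [|x w], om as [|a om]; try discriminate; [split; reflexivity|].
    simpl in Hn, Hom. destruct Hw as (Hx1 & Hx2 & Hxw & Hw).
    destruct (IH (firstn (x - 1) w) (firstn (x - 1) om)) as [E1 E2];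
      [rewrite length_firstn; lia | apply well_nested_firstn; auto |
       rewrite !length_firstn; lia |].
    destruct (IH (skipn (x - 1) w) (skipn (x - 1) om)) as [E3 E4];
      [rewrite length_skipn; lia | apply well_nested_skipn; auto |
       rewrite !length_skipn; lia |].
    cbn [decode]. rewrite bcode_cons, frc_cons, bvec_lprod, fr_lprod, E1, E2, E3, E4.
    simpl. rewrite !firstn_skipn, length_firstn. split; auto. f_equal. lia.
Qed.

Lemma decode_bcode n G : length (bcode G) <= n -> decode n (bcode G) (frc G) = G.
Proof.
  revert G; induction n as [|n IH]; intros [|C G] Hn; auto.
  - rewrite bcode_cons, length_app, length_bvec in Hn. pose proof (length_fr_pos C). lia.
  - destruct (formula_lprod_At C) as (a & Cs & ->).
    rewrite bcode_cons, length_app, length_bvec, fr_lprod, length_app in Hn. simpl in Hn.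
    rewrite <- length_bcode in Hn.
    rewrite bcode_cons, frc_cons, bvec_lprod, fr_lprod. simpl. rewrite Nat.sub_0_r.
    pose proof (length_bcode Cs).
    rewrite !firstn_app_length, !skipn_app_length, !IH by lia.
    reflexivity.
Qed.

Lemma bcode_inj G D : bcode G = bcode D -> frc G = frc D -> G = D.
Proof.
  intros Hc Hf.
  rewrite <- (decode_bcode (length (bcode G)) G), <- (decode_bcode (length (bcode G)) D);
    rewrite ?Hc, ?Hf; auto.
Qed.

(** * Meets and joins *)

Fixpoint mirror A : formula Atom :=
  match A with
  | At p => At p
  | Prod A B => Prod (mirror B) (mirror A)
  end.

Lemma fr_mirror A : fr (mirror A) = rev (fr A).
Proof. induction A; simpl; auto. rewrite rev_app_distr. congruence. Qed.

Lemma mirror_involutive A : mirror (mirror A) = A.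
Proof. induction A; simpl; congruence. Qed.

Lemma tamari_mirror A B : tam A B -> tam (mirror B) (mirror A).
Proof.
  intros H; induction H; simpl; eauto using t_refl, t_trans, t_assoc, t_mono.
Qed.

Lemma tamari_mirror_iff A B : tam (mirror A) (mirror B) <-> tam B A.
Proof.
  split; [|apply tamari_mirror].
  intros H. rewrite <- (mirror_involutive A), <- (mirror_involutive B).
  apply tamari_mirror, H.
Qed.

Lemma tamari_antisym A B : tam A B -> tam B A -> A = B.
Proof.
  intros [Hf Hv]%tamari_iff_bvec_le [_ Hv']%tamari_iff_bvec_le.
  enough ([A] = [B]) by congruence.
  apply bcode_inj; rewrite ?bcode_singleton, ?frc_singleton; auto.
  apply (Forall2_antisym Nat.le_antisymm); auto.
Qed.

Lemma subst_le_antisym G D : subst_le G D -> subst_le D G -> G = D.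
Proof.
  intros [Hf Hv]%subst_le_iff_bcode [_ Hv']%subst_le_iff_bcode.
  apply bcode_inj; auto. apply (Forall2_antisym Nat.le_antisymm); auto.
Qed.

Lemma subst_le_trans G D E : subst_le G D -> subst_le D E -> subst_le G E.
Proof.
  rewrite !subst_le_iff_bcode. intros [Hf Hv] [Hf' Hv'].
  split; [congruence | etransitivity; eauto].
Qed.

Lemma subst_le_refl G : subst_le G G.
Proof. apply subst_le_iff_bcode. split; reflexivity. Qed.

Lemma Ctx_has_meets Om : has_meets (Ctx Om) (@subst_le Atom).
Proof.
  intros G D HG HD. unfold Ctx in *.
  set (w := zip_min (bcode G) (bcode D)).
  assert (Hlen : length (bcode G) = length (bcode D)) by (rewrite !length_bcode; congruence).
  assert (Hw : well_nested w) by (apply well_nested_zip_min; auto using well_nested_bcode).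
  assert (Hlw : length Om = length w)
    by (unfold w; rewrite length_zip_min, <- Hlen, length_bcode, HG; lia).
  destruct (bcode_decode (length w) w Om (le_n _) Hw Hlw) as [Hcode Hfr].
  exists (decode (length w) w Om). split; [exact Hfr|].
  rewrite !subst_le_iff_bcode, Hcode, Hfr. repeat split; try congruence.
  - apply zip_min_le_l; auto.
  - apply zip_min_le_r; auto.
  - intros M HM. rewrite !subst_le_iff_bcode, Hcode, Hfr.
    intros [HMG HvG] [_ HvD]. split; [congruence | apply zip_min_glb; auto].
Qed.

Lemma Frm_cons_lprod a Om G : Ctx Om G -> Frm (a :: Om) (lprod (At a) G).
Proof. unfold Ctx, Frm. rewrite fr_lprod. simpl. congruence. Qed.

Lemma Frm_cons_inv a Om A : Frm (a :: Om) A -> exists G, Ctx Om G /\ lprod (At a) G = A.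
Proof.
  unfold Frm, Ctx. destruct (formula_lprod_At A) as (b & G & ->).
  rewrite fr_lprod. simpl. intros [= -> HG]. eauto.
Qed.

Lemma Frm_has_meets Om : has_meets (Frm Om) tam.
Proof.
  destruct Om as [|a Om].
  - intros A B HA. pose proof (length_fr_pos A). unfold Frm in HA. rewrite HA in *.
    simpl in *; lia.
  - apply (has_meets_iso (Y := Ctx Om) (leY := @subst_le Atom) (f := lprod (At a)));
      auto using Frm_cons_lprod, Frm_cons_inv, Ctx_has_meets.
    intros; apply tamari_lprod_iff_subst_le.
Qed.

Lemma Frm_has_joins Om : has_joins (Frm Om) tam.
Proof.
  apply (has_meets_iso (X := Frm (rev Om)) (leX := tam) (f := mirror)).
  - unfold Frm. intros A <-. apply fr_mirror.
  - unfold Frm. intros A HA. exists (mirror A).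
    rewrite fr_mirror, HA, rev_involutive, mirror_involutive. auto.
  - intros; apply tamari_mirror_iff.
  - apply Frm_has_meets.
Qed.

(** Any atom [a] will do: it only tags contexts, turning them into formulas [lprod (At a) G]. *)
Lemma Ctx_has_joins a Om : has_joins (Ctx Om) (@subst_le Atom).
Proof.
  apply (has_meets_iso (X := Frm (a :: Om)) (leX := fun A B => tam B A) (f := lprod (At a)));
    auto using Frm_cons_lprod, Frm_cons_inv.
  - intros; apply tamari_lprod_iff_subst_le.
  - apply Frm_has_joins.
Qed.

Lemma Frm_lattice Om : is_lattice (Frm Om) tam.
Proof.
  split; [|split; [|split; [|split]]].
  - intros; apply t_refl.
  - intros A B _ _; apply tamari_antisym.
  - intros A B C _ _ _; apply t_trans.
  - apply Frm_has_meets.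
  - apply Frm_has_joins.
Qed.

Lemma Ctx_lattice a Om : is_lattice (Ctx Om) (@subst_le Atom).
Proof.
  split; [|split; [|split; [|split]]].
  - intros; apply subst_le_refl.
  - intros G D _ _; apply subst_le_antisym.
  - intros G D E _ _ _; apply subst_le_trans.
  - apply Ctx_has_meets.
  - apply (Ctx_has_joins a).
Qed.

End Formulas.

Theorem theorem2p17 : forall (Atom : Type) (Om : list Atom),
  Om <> [] ->
  is_lattice (Frm Om) (@tamari Atom) /\ is_lattice (Ctx Om) (@subst_le Atom).
Proof.
  intros Atom [|a Om] HOm; [congruence|].
  split; [apply Frm_lattice | apply (Ctx_lattice _ a)].
Qed.
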